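(* Let $v_1,\dots,v_m\in\mathbb{C}^d$ with $m$ even, $\sum_{i=1}^m v_iv_i^*=\mathbb{I}$, $\|v_i\|^2=\alpha$ for all $i$, and $m\ge 49d^2$. Run Algorithm 2 (described in the context) on these vectors and let $A_{m/2}=\sum_{v\in\mathcal{A}_{m/2}}vv^*$ be the matrix corresponding to its output. Then \[ \log\det(\mathbb{I}-A_{m/2})\ge -d\log 2-\frac{2d^2}{m}. \]
   Context: Algorithm 2: set $A_0=\mathbf{0}_{d\times d}$, $\mathcal{A}_0=\emptyset$, $\mathcal{B}_0=\{v_1,\dots,v_m\}$. For $j=0,1,\dots,m/2-1$: choose $v_j\in\mathcal{B}_j$ minimising $v^*(\mathbb{I}-A_j)^{-1}v$ over $v\in\mathcal{B}_j$ (ties broken arbitrarily); set $A_{j+1}=A_j+v_jv_j^*$, $\mathcal{A}_{j+1}=\mathcal{A}_j\cup\{v_j\}$, $\mathcal{B}_{j+1}=\mathcal{B}_j\setminus\{v_j\}$. The output is $\mathcal{A}_{m/2}$. *)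

From HB Require Import structures.
From mathcomp Require Import all_boot all_order all_algebra.
From mathcomp Require Import complex.
From mathcomp Require Import reals exp.
Set Implicit Arguments. Unset Strict Implicit. Unset Printing Implicit Defensive.
Import Order.TTheory GRing.Theory Num.Theory.
Local Open Scope ring_scope.

Definition adjv (R : rcfType) (d : nat) (v : 'cV[R[i]]_d) : 'rV[R[i]]_d :=
  map_mx (@conjc R) v^T.

Definition outer (R : rcfType) (d : nat) (v : 'cV[R[i]]_d) : 'M[R[i]]_d :=
  v *m adjv v.

Definition qform (R : rcfType) (d : nat) (M : 'M[R[i]]_d) (v : 'cV[R[i]]_d) : R[i] :=
  (adjv v *m M *m v) 0 0.

Definition Apart (R : rcfType) (d m : nat) (v : 'I_m -> 'cV[R[i]]_d)
  (s : seq 'I_m) (k : nat) : 'M[R[i]]_d :=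
  \sum_(x <- take k s) outer (v x).

(* s (a sequence of indices into v_1..v_m, listed in order of selection) is a
   possible run of Algorithm 2: it has length m/2, no index is chosen twice,
   and at step k the chosen index minimises v^*(I - A_k)^{-1} v over the
   indices not yet chosen (ties broken arbitrarily).  The quantity
   v^*(I - A_k)^{-1} v is real since I - A_k is Hermitian; we compare real parts. *)
Definition alg2_run (R : rcfType) (d m : nat) (v : 'I_m -> 'cV[R[i]]_d)
  (s : seq 'I_m) : Prop :=
  [/\ size s = m./2, uniq s &
      forall k : nat, (k < m./2)%N ->
        forall x0 : 'I_m, forall x : 'I_m, x \notin take k s ->
          Re (qform (invmx (1%:M - Apart v s k)) (v (nth x0 s k)))
          <= Re (qform (invmx (1%:M - Apart v s k)) (v x))].

From HB Require Import structures.
From mathcomp Require Import all_boot all_order all_algebra.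
From mathcomp Require Import complex.
From mathcomp Require Import reals exp ring lra zify.
Set Implicit Arguments. Unset Strict Implicit. Unset Printing Implicit Defensive.
Import Order.TTheory GRing.Theory Num.Theory.
Local Open Scope ring_scope.

(* Write M_k = I - A_k.  By the matrix determinant lemma,
   det M_(k+1) = det M_k (1 - q_k) with q_k = v^* M_k^-1 v for the chosen v.
   The unchosen vectors sum to M_k, so their quadratic forms in M_k^-1 sum to
   tr I = d, and the greedy choice is at most their mean: q_k <= d/(m-k).
   As m >= 49 d^2 this is at most 1/4, so ln (1 - q_k) >= - q_k - q_k^2; the
   first-order terms are bounded by d (ln (m-k) - ln (m-k-1)), which telescopes
   to d ln 2 over the m/2 steps, and the second-order ones by (2d/m)^2, which
   add up to 2 d^2 / m. *)

Lemma ln_ge1Bv (R : realType) (y : R) : 0 < y -> 1 - y^-1 <= ln y.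
Proof.
move=> y_gt0; have Vy_gt0 : 0 < y^-1 by rewrite invr_gt0.
have Vy_gtN1 : -1 < y^-1 - 1 by lra.
by have := le_ln1Dx Vy_gtN1; rewrite addrCA subrr addr0 lnV ?posrE //; lra.
Qed.

Lemma ln1B_ge (R : realType) (x : R) :
  0 <= x -> x <= 1/4 -> - x - x ^+ 2 <= ln (1 - x).
Proof.
move=> x_ge0 x_le.
have half_gt0 : 0 < 1 - x / 2 by lra.
have rest_gt0 : 0 < (1 - x) / (1 - x / 2) by apply: divr_gt0; lra.
have -> : 1 - x = (1 - x / 2) * ((1 - x) / (1 - x / 2)).
  by rewrite mulrCA divff ?mulr1 ?gt_eqF.
rewrite lnM ?posrE //.
apply: le_trans _ (lerD (ln_ge1Bv half_gt0) (ln_ge1Bv rest_gt0)).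
rewrite invf_div.
have -> : 1 - (1 - x / 2)^-1 = - (x / (2 - x)) by field; lra.
have -> : 1 - (1 - x / 2) / (1 - x) = - (x / (2 - 2 * x)) by field; lra.
have le1 : x / (2 - x) <= x / 2 + x ^+ 2 / 3.
  rewrite ler_pdivrMr; [nra | lra].
have le2 : x / (2 - 2 * x) <= x / 2 + 2 * x ^+ 2 / 3.
  rewrite ler_pdivrMr; [nra | lra].
lra.
Qed.

Lemma invr_le_lnB (R : realType) (n : R) : 1 < n -> n^-1 <= ln n - ln (n - 1).
Proof.
move=> n_gt1.
have := @ln_ge1Bv _ (n / (n - 1)); rewrite ln_div ?posrE ?invf_div; try lra.
have -> : 1 - (n - 1) / n = n^-1 by field; lra.
apply; apply: divr_gt0; lra.
Qed.

Lemma ln1B_step (R : realType) (d n m q : R) :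
  0 <= d -> 1 < n -> d / n <= 1/4 -> 0 < m -> m <= 2 * n -> q <= d / n ->
  - (d * (ln n - ln (n - 1))) - 4 * d ^+ 2 / m ^+ 2 <= ln (1 - q).
Proof.
move=> d_ge0 n_gt1 dn_le m_gt0 m_le q_le.
have dn_ge0 : 0 <= d / n by apply: divr_ge0; lra.
have ln_mono : ln (1 - d / n) <= ln (1 - q) by rewrite ler_ln ?posrE; lra.
have first_order : d / n <= d * (ln n - ln (n - 1)).
  by rewrite ler_wpM2l // invr_le_lnB.
have second_order : (d / n) ^+ 2 <= 4 * d ^+ 2 / m ^+ 2.
  have dn_le2 : d / n <= 2 * d / m.
    rewrite ler_pdivrMr; last lra.
    rewrite mulrAC ler_pdivlMr //; nra.
  have -> : 4 * d ^+ 2 / m ^+ 2 = (2 * d / m) ^+ 2.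
    by rewrite expr_div_n exprMn; congr (_ * _ / _); lra.
  by rewrite ler_pXn2r ?nnegrE //; lra.
have := ln1B_ge dn_ge0 dn_le; lra.
Qed.

Lemma bound_at_half (R : realType) (d m h : nat) : m = (h + h)%N ->
  - (d%:R * ln 2) - 2 * (d ^ 2)%:R / m%:R
  <= - (d%:R * (ln m%:R - ln (m - h)%:R)) - h%:R * (4 * d%:R ^+ 2 / m%:R ^+ 2) :> R.
Proof.
move=> ->; rewrite addnK.
have [->|h_gt0] := posnP h.
  rewrite !mul0r subrr mulr0 oppr0 addr0 invr0 mulr0 subr0 oppr_le0.
  by rewrite mulr_ge0 // ln_ge0 // ler1n.
have hR_gt0 : 0 < h%:R :> R by rewrite ltr0n.
have -> : (h + h)%:R = 2 * h%:R :> R by rewrite natrD; lra.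
rewrite lnM ?posrE // addrK natrX.
have -> : h%:R * (4 * d%:R ^+ 2 / (2 * h%:R) ^+ 2) = 2 * d%:R ^+ 2 / (2 * h%:R) :> R.
  by field; rewrite gt_eqF.
by [].
Qed.

Lemma det1B_rank1 (R : comNzRingType) n (x : 'cV[R]_n) (u : 'rV[R]_n) :
  \det (1%:M - x *m u) = 1 - (u *m x) 0 0.
Proof.
pose B := block_mx (1%:M : 'M[R]_1) u x 1%:M.
have B_lu : B = block_mx 1%:M 0 x 1%:M *m block_mx 1%:M u 0 (1%:M - x *m u).
  by rewrite mulmx_block ?mulmx1 ?mul1mx ?mul0mx ?mulmx0 ?addr0 ?add0r addrC subrK.
have B_ul : B = block_mx (1%:M - u *m x) u 0 1%:M *m block_mx 1%:M 0 x 1%:M.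
  by rewrite mulmx_block ?mulmx1 ?mul1mx ?mul0mx ?mulmx0 ?addr0 ?add0r subrK.
have := congr1 determinant B_lu; rewrite B_ul !det_mulmx det_lblock !det_ublock.
by rewrite !det1 !mul1r !mulr1 det_mx11 !mxE => <-.
Qed.

Lemma detB_rank1 (F : fieldType) n (A : 'M[F]_n) (x : 'cV[F]_n) (u : 'rV[F]_n) :
  A \in unitmx -> \det (A - x *m u) = \det A * (1 - (u *m invmx A *m x) 0 0).
Proof.
move=> A_unit.
have -> : A - x *m u = A *m (1%:M - (invmx A *m x) *m u).
  by rewrite mulmxBr mulmx1 !mulmxA mulmxV // mul1mx.
by rewrite det_mulmx det1B_rank1 mulmxA.
Qed.

Lemma hermitian_det_real (R : rcfType) n (A : 'M[R[i]]_n) :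
  map_mx conjc A^T = A -> exists r : R, \det A = r%:C%C.
Proof.
move=> A_herm; have : (\det A)^*%C = \det A by rewrite -{2}A_herm det_map_mx det_tr.
case: (\det A) => a b [] /eqP.
rewrite -subr_eq0 -opprD oppr_eq0 -mulr2n mulrn_eq0 => /eqP ->.
by exists a.
Qed.

Lemma outer_hermitian (R : rcfType) d (w : 'cV[R[i]]_d) :
  map_mx conjc (outer w)^T = outer w.
Proof.
apply/matrixP => i j; rewrite !mxE !big_ord1 !mxE rmorphM /= conjcK mulrC.
by [].
Qed.

Lemma qform_tr (R : rcfType) d (N : 'M[R[i]]_d) (w : 'cV[R[i]]_d) :
  qform N w = \tr (N *m outer w).
Proof.
rewrite /qform /outer [in RHS]mxtrace_mulC -[in RHS]mulmxA [in RHS]mxtrace_mulC.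
by rewrite /mxtrace big_ord1.
Qed.

Lemma sumr_notin (V : nmodType) (I : finType) (t : seq I) (F : I -> V) :
  uniq t -> \sum_(x | x \notin t) F x + \sum_(x <- t) F x = \sum_x F x.
Proof. by move=> t_uniq; rewrite (big_uniq _ t_uniq) [RHS](bigID (mem t)) addrC. Qed.

Lemma card_notin (I : finType) (t : seq I) :
  uniq t -> #|[pred x | x \notin t]| = (#|I| - size t)%N.
Proof. by move=> t_uniq; rewrite -(card_uniqP t_uniq) -(cardC (mem t)) addKn. Qed.

Lemma Re_sum (R : rcfType) (I : finType) (P : pred I) (F : I -> R[i]) :
  complex.Re (\sum_(i | P i) F i) = \sum_(i | P i) complex.Re (F i).
Proof. by elim/big_rec2: _ => // i y z _ <-; case: (F i); case: z. Qed.

Lemma Re_natr (R : rcfType) n : complex.Re (n%:R : R[i]) = n%:R.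
Proof. by rewrite -(rmorph_nat (real_complex R)). Qed.

Lemma ReMc (R : rcfType) (a : R) (z : R[i]) :
  complex.Re (a%:C%C * z) = a * complex.Re z.
Proof. by case: z => x y /=; rewrite mul0r subr0. Qed.

Section Algorithm2.
Variables (R : realType) (d m : nat) (v : 'I_m -> 'cV[R[i]]_d) (s : seq 'I_m).
Hypothesis sum_outer_v : \sum_(i < m) outer (v i) = 1%:M.
Hypothesis run : alg2_run v s.

Let M k := 1%:M - Apart v s k.

Let uniq_s : uniq s. Proof. by case: run. Qed.

Lemma sum_outer_unchosen k : \sum_(x | x \notin take k s) outer (v x) = M k.
Proof.
apply/eqP; rewrite eq_sym subr_eq -sum_outer_v.
by rewrite sumr_notin ?take_uniq.
Qed.

Lemma M_hermitian k : map_mx conjc (M k)^T = M k.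
Proof.
rewrite /M /Apart linearB /= trmx1 map_mxB map_mx1 linear_sum map_mx_sum.
by congr (_ - _); apply: eq_bigr => x _; rewrite outer_hermitian.
Qed.

Lemma det_M_succ k (x0 : 'I_m) : (k < m./2)%N -> M k \in unitmx ->
  \det (M k.+1) = \det (M k) * (1 - qform (invmx (M k)) (v (nth x0 s k))).
Proof.
move=> k_lt M_unit; have [size_s _ _] := run.
rewrite -detB_rank1 // /M /Apart (take_nth x0) ?size_s //.
by rewrite -cats1 big_cat big_seq1 opprD addrA.
Qed.

Lemma Re_qform_chosen_le k (x0 : 'I_m) : (k < m./2)%N -> M k \in unitmx ->
  complex.Re (qform (invmx (M k)) (v (nth x0 s k))) * (m - k)%:R <= d%:R.
Proof.
move=> k_lt M_unit; have [size_s _ chosen_min] := run.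
set N := invmx (M k).
have card_unchosen : #|[pred x | x \notin take k s]| = (m - k)%N.
  by rewrite card_notin ?take_uniq // card_ord size_takel // size_s ltnW.
have sum_unchosen : \sum_(x | x \notin take k s) complex.Re (qform N (v x)) = d%:R.
  rewrite -Re_sum (eq_bigr _ (fun x _ => qform_tr N (v x))) -raddf_sum -mulmx_sumr.
  by rewrite sum_outer_unchosen mulVmx // /= mxtrace1 Re_natr.
rewrite -card_unchosen mulr_natr -sumr_const -sum_unchosen.
apply: ler_sum => x; rewrite inE => x_unchosen.
by have := chosen_min k k_lt x0 x x_unchosen; rewrite -!complexRe lecR.
Qed.

Hypothesis m_large : (49 * d ^ 2 <= m)%N.

Lemma det_M_lb k : (k <= m./2)%N -> exists r : R,
  [/\ \det (M k) = r%:C%C, 0 < r &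
      - (d%:R * (ln m%:R - ln (m - k)%:R)) - k%:R * (4 * d%:R ^+ 2 / m%:R ^+ 2) <= ln r].
Proof.
elim: k => [_|k IH k_lt].
  exists 1; split => //.
    by rewrite /M /Apart take0 big_nil subr0 det1.
  by rewrite subn0 subrr mulr0 oppr0 mul0r subr0 ln1.
have [r [det_r r_gt0 ln_r]] := IH (ltnW k_lt).
have half_m := odd_double_half m.
have x0 : 'I_m by exists 0%N; nia.
have M_unit : M k \in unitmx by rewrite unitmxE det_r unitfE fmorph_eq0 gt_eqF.
set q := complex.Re (qform (invmx (M k)) (v (nth x0 s k))).
have [r' det_r'] := hermitian_det_real (M_hermitian k.+1).
have r'E : r' = r * (1 - q).
  have := det_M_succ x0 k_lt M_unit; rewrite det_r' det_r.
  by move=> /(congr1 (@complex.Re R)); rewrite ReMc; case: (qform _ _) @q.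
set n : R := (m - k)%:R.
have n_gt1 : 1 < n by rewrite ltr1n; nia.
have m_gt0 : 0 < m%:R :> R by rewrite ltr0n; nia.
have m_le : m%:R <= 2 * n.
  have m_le_nat : (m <= 2 * (m - k))%N by nia.
  by rewrite -(ler_nat R) natrM in m_le_nat.
have dn_le : d%:R / n <= 1/4.
  have d_le_nat : (4 * d <= m - k)%N by nia.
  rewrite -(ler_nat R) natrM in d_le_nat.
  rewrite ler_pdivrMr; lra.
have q_le : q <= d%:R / n by rewrite ler_pdivlMr; [exact: Re_qform_chosen_le | lra].
have q_lt1 : 0 < 1 - q by lra.
exists r'; split; first by [].
  by rewrite r'E mulr_gt0.
have n1E : (m - k.+1)%:R = n - 1.
  by rewrite /n (_ : (m - k = (m - k.+1).+1)%N) -?natr1 ?addrK //; nia.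
rewrite r'E lnM ?posrE // n1E -natr1.
have := ln1B_step (ler0n _ d) n_gt1 dn_le m_gt0 m_le q_le; lra.
Qed.

End Algorithm2.

Theorem lemma4p1 (R : realType) (d m : nat) (v : 'I_m -> 'cV[R[i]]_d)
  (alpha : R) (s : seq 'I_m) :
  ~~ odd m ->
  \sum_(i < m) outer (v i) = 1%:M ->
  (forall i : 'I_m, qform 1%:M (v i) = (alpha%:C)%C) ->
  (49 * d ^ 2 <= m)%N ->
  alg2_run v s ->
  exists r : R,
    [/\ \det (1%:M - \sum_(x <- s) outer (v x)) = (r%:C)%C, 0 < r &
        - (d%:R * ln 2) - 2 * (d ^ 2)%:R / m%:R <= ln r].
Proof.
move=> m_even sum_outer_v _ m_large run.
have [size_s _ _] := run.
have [r [det_r r_gt0 ln_r]] := det_M_lb sum_outer_v run m_large (leqnn m./2).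
exists r; split => //.
  by rewrite /Apart -size_s take_size in det_r.
have m_half : m = (m./2 + m./2)%N.
  by rewrite addnn -[LHS]odd_double_half (negbTE m_even).
exact: le_trans (bound_at_half R d m_half) ln_r.
Qed.
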